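(* Let $G$ be a Lindelöf $\omega$-stable Hausdorff topological group with $\psi(G)\leq\mathfrak c$. Then $w(G)\leq\mathfrak c$.
   Context: $\psi$ pseudocharacter, $w$ weight, $nw$ network weight, $\mathfrak c=2^\omega$. A Tychonoff space $X$ is $\kappa$-stable (for infinite $\kappa$) if every continuous image $Y$ of $X$ which admits a continuous one-to-one mapping onto a Tychonoff space $Z$ with $w(Z)\leq\kappa$ satisfies $nw(Y)\leq\kappa$. *)

From Stdlib Require Import Reals.
Open Scope R_scope.
Set Implicit Arguments.

Record topology (X : Type) := Topology {
  open : (X -> Prop) -> Prop;
  open_full : open (fun _ => True);
  open_inter : forall U V, open U -> open V -> open (fun x => U x /\ V x);
  open_union : forall F : (X -> Prop) -> Prop,
      (forall U, F U -> open U) -> open (fun x => exists U, F U /\ U x)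
}.
Arguments open {X} t U.

Definition closed {X : Type} (t : topology X) (F : X -> Prop) : Prop :=
  open t (fun x => ~ F x).

Definition card_le {T K : Type} (S : (T -> Prop) -> Prop) : Prop :=
  exists f : {A : T -> Prop | S A} -> K,
    forall a b, f a = f b -> proj1_sig a = proj1_sig b.
Arguments card_le {T} K S.

Definition continuous {X Y : Type} (tX : topology X) (tY : topology Y)
  (f : X -> Y) : Prop :=
  forall V, open tY V -> open tX (fun x => V (f x)).

Definition continuous_real {X : Type} (t : topology X) (f : X -> R) : Prop :=
  forall x eps, 0 < eps ->
    exists U, open t U /\ U x /\ forall y, U y -> Rabs (f y - f x) < eps.

Definition hausdorff {X : Type} (t : topology X) : Prop :=
  forall x y, x <> y -> exists U V, open t U /\ open t V /\ U x /\ V y /\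
    forall z, ~ (U z /\ V z).

Definition tychonoff {X : Type} (t : topology X) : Prop :=
  (forall x y : X, x <> y -> exists U, open t U /\ U y /\ ~ U x) /\
  (forall (F : X -> Prop) (x : X), closed t F -> ~ F x ->
     exists f : X -> R, continuous_real t f /\ f x = 0 /\
       forall y, F y -> f y = 1).

Definition lindelof {X : Type} (t : topology X) : Prop :=
  forall F : (X -> Prop) -> Prop, (forall U, F U -> open t U) ->
    (forall x, exists U, F U /\ U x) ->
    exists C : (X -> Prop) -> Prop, (forall U, C U -> F U) /\
      (forall x, exists U, C U /\ U x) /\ card_le nat C.

Definition is_base {X : Type} (t : topology X) (B : (X -> Prop) -> Prop) : Prop :=
  (forall V, B V -> open t V) /\
  forall U x, open t U -> U x -> exists V, B V /\ V x /\ forall y, V y -> U y.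

Definition is_network {X : Type} (t : topology X) (N : (X -> Prop) -> Prop) : Prop :=
  forall U x, open t U -> U x -> exists V, N V /\ V x /\ forall y, V y -> U y.

Definition weight_le (K : Type) {X : Type} (t : topology X) : Prop :=
  exists B, is_base t B /\ card_le K B.

Definition netweight_le (K : Type) {X : Type} (t : topology X) : Prop :=
  exists N, is_network t N /\ card_le K N.

Definition pseudochar_le (K : Type) {X : Type} (t : topology X) : Prop :=
  forall x : X, exists P : (X -> Prop) -> Prop,
    (forall U, P U -> open t U) /\ (forall U, P U -> U x) /\
    (forall y, (forall U, P U -> U y) -> y = x) /\ card_le K P.

Definition stable (K : Type) {X : Type} (tX : topology X) : Prop :=
  forall (Y : Type) (tY : topology Y) (f : X -> Y),
    continuous tX tY f -> (forall y, exists x, f x = y) ->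
  forall (Z : Type) (tZ : topology Z) (g : Y -> Z),
    continuous tY tZ g ->
    (forall a b, g a = g b -> a = b) -> (forall z, exists y, g y = z) ->
    tychonoff tZ -> weight_le K tZ ->
    netweight_le K tY.

(* cardinals omega and c = 2^omega, represented by types *)
Definition omega_t : Type := nat.
Definition continuum_t : Type := nat -> bool.

Record topological_group {G : Type} (t : topology G)
  (mul : G -> G -> G) (inv : G -> G) (e : G) : Prop := {
  tg_assoc : forall x y z, mul x (mul y z) = mul (mul x y) z;
  tg_unit_l : forall x, mul e x = x;
  tg_unit_r : forall x, mul x e = x;
  tg_inv_l : forall x, mul (inv x) x = e;
  tg_inv_r : forall x, mul x (inv x) = e;
  (* multiplication G x G -> G continuous (product topology, unfolded) *)
  tg_mul_cont : forall x y W, open t W -> W (mul x y) ->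
     exists U V, open t U /\ open t V /\ U x /\ V y /\
       forall a b, U a -> V b -> W (mul a b);
  tg_inv_cont : continuous t t inv
}.

From Stdlib Require Import Arith Lia Reals Lra List Classical ClassicalEpsilon
  FunctionalExtensionality PropExtensionality ProofIrrelevance.
From Stdlib Require Cantor.
Import ListNotations.
Open Scope R_scope.

(* For a neighbourhood of the identity, a sequence V_n of symmetric neighbourhoods with
   V_(n+1)^3 ⊆ V_n yields, by the Birkhoff-Kakutani chain construction, a continuous
   left-invariant pseudometric d. Its metric identification is separable because G is
   Lindelöf, so it is a Tychonoff space of countable weight onto which the quotient G/d maps by
   a continuous bijection; ω-stability then gives G/d a countable network, hence at most 𝔠 open
   sets. As ψ(G) ≤ 𝔠, the identity is an intersection of 𝔠 open sets; meeting countably many of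
   the corresponding sequences, Lindelöfness puts the kernel of the resulting pseudometric inside
   any given neighbourhood of e, so every open set is a union of open sets saturated for one of
   these 𝔠^ω = 𝔠 pseudometrics, each of which has at most 𝔠 saturated open sets. *)

Lemma pred_ext {X : Type} (U W : X -> Prop) : (forall x, U x <-> W x) -> U = W.
Proof.
  intro H; apply functional_extensionality; intro x; apply propositional_extensionality; auto.
Qed.

Lemma sig_eq {A : Type} {P : A -> Prop} (a b : {x | P x}) : proj1_sig a = proj1_sig b -> a = b.
Proof.
  destruct a as [a Ha], b as [b Hb]; simpl; intros ->; f_equal; apply proof_irrelevance.
Qed.

Section Topology.
Context {X : Type} (t : topology X).

Lemma open_ext (U W : X -> Prop) : (forall x, U x <-> W x) -> open t U -> open t W.
Proof. intros H; rewrite (pred_ext U W H); auto. Qed.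

Lemma open_of_nbhd (U : X -> Prop) :
  (forall x, U x -> exists W, open t W /\ W x /\ forall y, W y -> U y) -> open t U.
Proof.
  intro H.
  apply open_ext with (fun x => exists W, (open t W /\ forall y, W y -> U y) /\ W x).
  - intro x; split.
    + intros [W [[_ HW] Wx]]; auto.
    + intro Ux; destruct (H x Ux) as [W [? [? ?]]]; exists W; auto.
  - apply open_union; intros W [? _]; auto.
Qed.

Lemma open_bounded_inter (Q : nat -> X -> Prop) :
  (forall k, open t (Q k)) -> forall n, open t (fun x => forall k, (k <= n)%nat -> Q k x).
Proof.
  intros HQ n; induction n as [|n IHn].
  - apply open_ext with (Q O); auto.
    intro x; split; [intros H k Hk; replace k with O by lia; auto | intro H; apply H; lia].
  - apply open_ext with (fun x => (forall k, (k <= n)%nat -> Q k x) /\ Q (S n) x).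
    + intro x; split.
      * intros [H1 H2] k Hk; destruct (Nat.eq_dec k (S n)); [subst; auto | apply H1; lia].
      * intro H; split; [intros; apply H; lia | apply H; lia].
    + apply open_inter; auto.
Qed.

Lemma lindelof_seq_subcover (I : Type) (i0 : I) (f : I -> X -> Prop) :
  lindelof t -> (forall i, open t (f i)) -> (forall x, exists i, f i x) ->
  exists s : nat -> I, forall x, exists k, f (s k) x.
Proof.
  intros HL Hopen Hcov.
  destruct (HL (fun W => exists i, W = f i)) as [C [HCf [HCcov [code Hcode]]]].
  - intros U [i ->]; apply Hopen.
  - intro x; destruct (Hcov x) as [i Hi]; exists (f i); eauto.
  - pose (named k i := exists W (CW : C W), code (exist _ W CW) = k /\ W = f i).
    exists (fun k => epsilon (inhabits i0) (named k)).
    intro x; destruct (HCcov x) as [W [CW Wx]].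
    exists (code (exist _ W CW)).
    destruct (epsilon_spec (inhabits i0) (named (code (exist _ W CW)))) as [W' [CW' [Hc HW']]].
    + destruct (HCf W CW) as [i ->]; exists i, (f i), CW; auto.
    + apply Hcode in Hc; simpl in Hc; subst W'; rewrite <- HW'; exact Wx.
Qed.

Lemma pseudochar_family (K : Type) (x : X) : pseudochar_le K t ->
  exists U : K -> X -> Prop, (forall a, open t (U a)) /\ (forall a, U a x) /\
    (forall y, (forall a, U a y) -> y = x).
Proof.
  intro Hpsi; destruct (Hpsi x) as [P [HPopen [HPx [HPsep [code Hcode]]]]].
  (* [U a] is the member of [P] coded by [a], or the whole space if there is none *)
  exists (fun a y => forall W (PW : P W), code (exist _ W PW) = a -> W y).
  split; [|split].
  - intro a; destruct (classic (exists W (PW : P W), code (exist _ W PW) = a))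
      as [[W [PW Hc]] | Hnone].
    + apply open_ext with W; [|apply HPopen; auto].
      intro y; split.
      * intros Wy W' PW' Hc'; rewrite <- Hc' in Hc; apply Hcode in Hc; simpl in Hc.
        subst; auto.
      * intro Hy; apply (Hy W PW Hc).
    + apply open_ext with (fun _ => True); [|apply open_full].
      intro y; split; auto; intros _ W PW Hc; exfalso; eauto.
  - intros a W PW _; apply HPx; auto.
  - intros y Hy; apply HPsep; intros W PW; apply (Hy _ W PW eq_refl).
Qed.

End Topology.

Lemma card_le_range {T K : Type} (f : K -> T -> Prop) : card_le K (fun W => exists k, W = f k).
Proof.
  exists (fun W : {A | exists k, A = f k} =>
    proj1_sig (constructive_indefinite_description _ (proj2_sig W))).
  intros [a Ha] [b Hb]; simpl.
  destruct (constructive_indefinite_description _ Ha) as [ka ->].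
  destruct (constructive_indefinite_description _ Hb) as [kb ->]; simpl.
  intros ->; reflexivity.
Qed.

Lemma card_le_inj {T K K' : Type} (S : (T -> Prop) -> Prop) (j : K -> K') :
  (forall a b, j a = j b -> a = b) -> card_le K S -> card_le K' S.
Proof. intros Hj [f Hf]; exists (fun A => j (f A)); auto. Qed.

(** * Dyadic weights and infima *)

Definition dyad (m : nat) : R := (/ 2) ^ m.

Lemma dyad_pos m : 0 < dyad m.
Proof. apply pow_lt; lra. Qed.

Lemma dyad_S m : dyad (S m) = dyad m / 2.
Proof. unfold dyad; simpl; lra. Qed.

Lemma dyad_le1 m : dyad m <= 1.
Proof.
  induction m as [|m IH]; [unfold dyad; simpl; lra|].
  rewrite dyad_S; pose proof (dyad_pos m); lra.
Qed.

Lemma dyad_lt m n : (m < n)%nat -> dyad n < dyad m.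
Proof.
  intro H; induction H as [|n H IH]; rewrite dyad_S;
    [pose proof (dyad_pos m) | pose proof (dyad_pos n)]; lra.
Qed.

Lemma dyad_small eps : 0 < eps -> exists n, dyad n < eps.
Proof.
  intro Heps; destruct (pow_lt_1_zero (/ 2)) with (2 := Heps) as [N HN].
  - rewrite Rabs_pos_eq; lra.
  - exists N; specialize (HN N (le_n N)); rewrite Rabs_pos_eq in HN; auto.
    apply Rlt_le, dyad_pos.
Qed.

Section Infimum.
Variable S : R -> Prop.
Hypothesis S_ne : exists s, S s.
Hypothesis S_ge0 : forall s, S s -> 0 <= s.

Definition is_glb (m : R) : Prop :=
  (forall s, S s -> m <= s) /\ (forall b, (forall s, S s -> b <= s) -> b <= m).

Definition Rinf : R := epsilon (inhabits 0) is_glb.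

Lemma Rinf_glb : is_glb Rinf.
Proof.
  unfold Rinf; apply epsilon_spec.
  destruct (completeness (fun r => S (- r))) as [m [Hub Hleast]].
  - exists 0; intros r Hr; apply S_ge0 in Hr; lra.
  - destruct S_ne as [s Hs]; exists (- s); rewrite Ropp_involutive; auto.
  - exists (- m); split.
    + intros s Hs; enough (- s <= m) by lra; apply Hub; rewrite Ropp_involutive; auto.
    + intros b Hb; enough (m <= - b) by lra.
      apply Hleast; intros r Hr; specialize (Hb _ Hr); lra.
Qed.

Lemma Rinf_le s : S s -> Rinf <= s.
Proof. apply Rinf_glb. Qed.

Lemma Rinf_ge0 : 0 <= Rinf.
Proof. apply Rinf_glb; auto. Qed.

Lemma Rinf_approx eps : 0 < eps -> exists s, S s /\ s < Rinf + eps.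
Proof.
  intro Heps; apply NNPP; intro Hnone.
  enough (Rinf + eps <= Rinf) by lra.
  apply Rinf_glb; intros s Hs; apply Rnot_lt_le; intro Hlt; eauto.
Qed.

End Infimum.

(** * Metric identification of a pseudometric space *)

Definition pseudometric {X : Type} (d : X -> X -> R) : Prop :=
  (forall x, d x x = 0) /\ (forall x y, d x y = d y x) /\
  (forall x y z, d x z <= d x y + d y z).

Definition saturated {X : Type} (d : X -> X -> R) (O : X -> Prop) : Prop :=
  forall x y, d x y = 0 -> O x -> O y.

Lemma Rmin1_lipschitz a b : Rabs (Rmin 1 b - Rmin 1 a) <= Rabs (b - a).
Proof.
  destruct (Rcase_abs (b - a)); [rewrite (Rabs_left (b - a)) | rewrite (Rabs_right (b - a))];
    auto; unfold Rmin; destruct (Rle_dec 1 b), (Rle_dec 1 a); apply Rabs_le; lra.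
Qed.

Section MetricIdentification.
Context {X : Type} (t : topology X) (d : X -> X -> R).
Hypothesis Hd : pseudometric d.

Lemma pm_refl x : d x x = 0.
Proof. apply Hd. Qed.

Lemma pm_sym x y : d x y = d y x.
Proof. apply Hd. Qed.

Lemma pm_tri x y z : d x z <= d x y + d y z.
Proof. apply Hd. Qed.

Lemma pm_ge0 x y : 0 <= d x y.
Proof. pose proof (pm_tri x y x); rewrite pm_refl, (pm_sym y x) in H; lra. Qed.

Lemma pm_lipschitz a x y : Rabs (d a y - d a x) <= d x y.
Proof.
  pose proof (pm_tri a x y); pose proof (pm_tri a y x); rewrite (pm_sym y x) in *.
  apply Rabs_le; lra.
Qed.

Definition mquot : Type := {P : X -> Prop | exists x, P = fun y => d x y = 0}.

Definition mproj (x : X) : mquot := exist _ (fun y => d x y = 0) (ex_intro _ x eq_refl).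

Definition mrepr (q : mquot) : X :=
  proj1_sig (constructive_indefinite_description _ (proj2_sig q)).

Lemma mproj_mrepr q : mproj (mrepr q) = q.
Proof.
  apply sig_eq; unfold mrepr; simpl.
  destruct (constructive_indefinite_description _ _) as [x Hx]; simpl; auto.
Qed.

Lemma mproj_eq x y : d x y = 0 -> mproj x = mproj y.
Proof.
  intro Hxy; apply sig_eq, pred_ext; intro z; simpl.
  pose proof (pm_tri x y z); pose proof (pm_tri y x z); rewrite (pm_sym y x) in *.
  pose proof (pm_ge0 x z); pose proof (pm_ge0 y z); split; intro; lra.
Qed.

Lemma dist_mproj_eq x y : mproj x = mproj y -> d x y = 0.
Proof.
  intro H; apply (f_equal (fun q => proj1_sig q y)) in H; simpl in H.
  rewrite H; apply pm_refl.
Qed.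

Lemma dist_mrepr a x : d a (mrepr (mproj x)) = d a x.
Proof.
  assert (H : d x (mrepr (mproj x)) = 0) by (apply dist_mproj_eq; rewrite mproj_mrepr; auto).
  pose proof (pm_tri a x (mrepr (mproj x))); pose proof (pm_tri a (mrepr (mproj x)) x).
  pose proof (pm_sym (mrepr (mproj x)) x); lra.
Qed.

Lemma saturated_mrepr O x : saturated d O -> O (mrepr (mproj x)) <-> O x.
Proof.
  intro HO; split; apply HO; [rewrite pm_sym|]; rewrite dist_mrepr; apply pm_refl.
Qed.

Definition quotient_open (W : mquot -> Prop) : Prop := open t (fun x => W (mproj x)).

Lemma quotient_open_full : quotient_open (fun _ => True).
Proof. apply open_full. Qed.

Lemma quotient_open_inter U W :
  quotient_open U -> quotient_open W -> quotient_open (fun q => U q /\ W q).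
Proof. apply open_inter. Qed.

Lemma quotient_open_union (F : (mquot -> Prop) -> Prop) :
  (forall U, F U -> quotient_open U) -> quotient_open (fun q => exists U, F U /\ U q).
Proof.
  intro HF; unfold quotient_open.
  apply open_ext with
    (fun x => exists U', (exists W, F W /\ U' = fun y => W (mproj y)) /\ U' x).
  - intro x; split.
    + intros [U' [[W [FW ->]] HW]]; exists W; auto.
    + intros [W [FW HW]]; exists (fun y => W (mproj y)); split; [exists W|]; auto.
  - apply open_union; intros U' [W [FW ->]]; apply HF; auto.
Qed.

Definition quotient_top : topology mquot :=
  Topology quotient_open quotient_open_full quotient_open_inter quotient_open_union.

Lemma saturated_quotient_open O :
  open t O -> saturated d O -> open quotient_top (fun q => O (mrepr q)).
Proof.
  intros HO Hsat; apply open_ext with O; auto.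
  intro x; symmetry; apply saturated_mrepr; auto.
Qed.

Definition metric_open (W : mquot -> Prop) : Prop :=
  forall x, W (mproj x) -> exists eps, 0 < eps /\ forall y, d x y < eps -> W (mproj y).

Lemma metric_open_full : metric_open (fun _ => True).
Proof. intros x _; exists 1; split; [lra | auto]. Qed.

Lemma metric_open_inter U W :
  metric_open U -> metric_open W -> metric_open (fun q => U q /\ W q).
Proof.
  intros HU HW x [Ux Wx].
  destruct (HU x Ux) as [e1 [He1 H1]], (HW x Wx) as [e2 [He2 H2]].
  exists (Rmin e1 e2); split; [apply Rmin_pos; auto|].
  pose proof (Rmin_l e1 e2); pose proof (Rmin_r e1 e2).
  intros y Hy; split; [apply H1 | apply H2]; lra.
Qed.

Lemma metric_open_union (F : (mquot -> Prop) -> Prop) :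
  (forall U, F U -> metric_open U) -> metric_open (fun q => exists U, F U /\ U q).
Proof.
  intros HF x [U [FU Ux]]; destruct (HF U FU x Ux) as [eps [Heps HU]].
  exists eps; split; auto; intros y Hy; exists U; auto.
Qed.

Definition metric_top : topology mquot :=
  Topology metric_open metric_open_full metric_open_inter metric_open_union.

Definition metric_ball (c : X) (r : R) : mquot -> Prop := fun q => d c (mrepr q) < r.

Lemma metric_ball_open c r : open metric_top (metric_ball c r).
Proof.
  intros x Hx; unfold metric_ball in *; rewrite dist_mrepr in Hx.
  exists (r - d c x); split; [lra|]; intros y Hy; rewrite dist_mrepr.
  pose proof (pm_tri c x y); lra.
Qed.

Lemma continuous_of_lipschitz (f : mquot -> R) k : 0 < k ->
  (forall q q', Rabs (f q' - f q) <= k * d (mrepr q) (mrepr q')) ->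
  continuous_real metric_top f.
Proof.
  intros Hk Hf q eps Heps.
  exists (metric_ball (mrepr q) (eps / k)); split; [apply metric_ball_open|split].
  - unfold metric_ball; rewrite pm_refl; apply Rdiv_lt_0_compat; auto.
  - intros q' Hq'; unfold metric_ball in Hq'.
    apply Rle_lt_trans with (1 := Hf q q').
    apply Rmult_lt_compat_l with (r := k) in Hq'; auto.
    replace (k * (eps / k)) with eps in Hq' by (field; lra); lra.
Qed.

Lemma metric_top_T1 q1 q2 : q1 <> q2 -> exists U, open metric_top U /\ U q2 /\ ~ U q1.
Proof.
  intro Hne.
  assert (Hpos : d (mrepr q2) (mrepr q1) <> 0).
  { intro H0; apply Hne; rewrite <- (mproj_mrepr q1), <- (mproj_mrepr q2).
    symmetry; apply mproj_eq; auto. }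
  pose proof (pm_ge0 (mrepr q2) (mrepr q1)).
  exists (metric_ball (mrepr q2) (d (mrepr q2) (mrepr q1))).
  split; [apply metric_ball_open|]; unfold metric_ball; rewrite pm_refl; lra.
Qed.

Lemma metric_top_completely_regular F q : closed metric_top F -> ~ F q ->
  exists f : mquot -> R, continuous_real metric_top f /\ f q = 0 /\ forall q', F q' -> f q' = 1.
Proof.
  intros HF Fq; set (x0 := mrepr q).
  destruct (HF x0) as [eps [Heps Hball]]; [unfold x0; rewrite mproj_mrepr; auto|].
  exists (fun q' => Rmin 1 (d x0 (mrepr q') / eps)); split; [|split].
  - apply continuous_of_lipschitz with (/ eps); [apply Rinv_0_lt_compat; auto|].
    intros q1 q2; unfold Rdiv.
    pose proof (pm_lipschitz x0 (mrepr q1) (mrepr q2)).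
    assert (Hinv : 0 < / eps) by (apply Rinv_0_lt_compat; auto).
    assert (Hdiff : Rabs (d x0 (mrepr q2) * / eps - d x0 (mrepr q1) * / eps)
                    <= / eps * d (mrepr q1) (mrepr q2)).
    { rewrite <- Rmult_minus_distr_r, Rabs_mult, (Rabs_pos_eq (/ eps)) by lra.
      rewrite Rmult_comm; apply Rmult_le_compat_l; lra. }
    exact (Rle_trans _ _ _ (Rmin1_lipschitz _ _) Hdiff).
  - unfold x0; rewrite pm_refl; unfold Rdiv; rewrite Rmult_0_l.
    unfold Rmin; destruct (Rle_dec 1 0); lra.
  - intros q' Fq'.
    assert (Hfar : eps <= d x0 (mrepr q')).
    { apply Rnot_lt_le; intro Hlt; apply Hball in Hlt; rewrite mproj_mrepr in Hlt; auto. }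
    unfold Rmin; destruct (Rle_dec 1 _) as [|Hn]; auto.
    exfalso; apply Hn; apply Rmult_le_reg_r with eps; auto.
    unfold Rdiv; rewrite Rmult_assoc, Rinv_l; lra.
Qed.

Lemma metric_top_tychonoff : tychonoff metric_top.
Proof. split; [apply metric_top_T1 | apply metric_top_completely_regular]. Qed.

Lemma metric_top_weight :
  (forall n, exists c : nat -> X, forall y, exists k, d (c k) y < dyad n) ->
  weight_le omega_t metric_top.
Proof.
  intro Hdense; destruct (choice _ Hdense) as [c Hc].
  pose (ball k := let (n, j) := Cantor.of_nat k in metric_ball (c n j) (dyad n)).
  exists (fun W => exists k, W = ball k); split; [split | apply card_le_range].
  - intros W [k ->]; unfold ball; destruct (Cantor.of_nat k); apply metric_ball_open.
  - intros U q HU Uq.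
    set (x := mrepr q).
    destruct (HU x) as [eps [Heps Hx]]; [unfold x; rewrite mproj_mrepr; auto|].
    destruct (dyad_small (eps / 2)) as [n Hn]; [lra|].
    destruct (Hc n x) as [j Hj].
    exists (ball (Cantor.to_nat (n, j))); split; [eauto|].
    unfold ball; rewrite Cantor.cancel_of_to; split; [exact Hj|].
    intros q' Hq'; rewrite <- (mproj_mrepr q'); apply Hx.
    pose proof (pm_tri x (c n j) (mrepr q')); pose proof (pm_sym x (c n j)).
    unfold metric_ball in Hq'; lra.
Qed.

Lemma lindelof_dense_seq (x0 : X) : lindelof t ->
  (forall x r, open t (fun y => d x y < r)) ->
  forall eps, 0 < eps -> exists c : nat -> X, forall y, exists k, d (c k) y < eps.
Proof.
  intros HL Hball eps Heps.
  apply (lindelof_seq_subcover t _ x0 (fun x y => d x y < eps)); auto.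
  intro y; exists y; rewrite pm_refl; auto.
Qed.

Lemma quotient_netweight : stable omega_t t ->
  (forall x r, open t (fun y => d x y < r)) ->
  (forall n, exists c : nat -> X, forall y, exists k, d (c k) y < dyad n) ->
  netweight_le omega_t quotient_top.
Proof.
  intros HS Hball Hdense.
  apply (HS mquot quotient_top mproj) with (tZ := metric_top) (g := fun q => q).
  - intros W HW; exact HW.
  - intro q; exists (mrepr q); apply mproj_mrepr.
  - intros W HW; change (open t (fun x => W (mproj x))); apply open_of_nbhd; intros x Wx.
    destruct (HW x Wx) as [eps [Heps Hx]].
    exists (fun y => d x y < eps); rewrite pm_refl; auto.
  - auto.
  - intro q; exists q; auto.
  - apply metric_top_tychonoff.
  - apply metric_top_weight; auto.
Qed.

End MetricIdentification.

(** * Counting open sets through networks *)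

Lemma network_open_ext {Y : Type} (T : topology Y) N W W' :
  is_network T N -> open T W -> open T W' ->
  (forall V, N V -> (forall y, V y -> W y) <-> (forall y, V y -> W' y)) -> W = W'.
Proof.
  intros HN HW HW' HV; apply pred_ext; intro y; split; intro Hy.
  - destruct (HN W y HW Hy) as [V [NV [Vy HVW]]]; apply (HV V NV); auto.
  - destruct (HN W' y HW' Hy) as [V [NV [Vy HVW]]]; apply (HV V NV); auto.
Qed.

Lemma open_code_of_netweight {Y : Type} (T : topology Y) : netweight_le omega_t T ->
  exists s : (Y -> Prop) -> nat -> bool,
    forall W W', open T W -> open T W' -> s W = s W' -> W = W'.
Proof.
  intros [N [HN [code Hcode]]].
  (* an open set is coded by the indices of the network members it contains *)
  pose (s W k := if excluded_middle_informative
    (exists V (NV : N V), code (exist _ V NV) = k /\ forall y, V y -> W y) then true else false).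
  assert (Hs : forall W V (NV : N V),
             (forall y, V y -> W y) <-> s W (code (exist _ V NV)) = true).
  { intros W V NV; unfold s.
    destruct (excluded_middle_informative _) as [[V' [NV' [Hc HV']]] | Hn];
      split; intro H; auto; try discriminate.
    - apply Hcode in Hc; simpl in Hc; subst; auto.
    - exfalso; apply Hn; eauto. }
  exists s; intros W W' HW HW' Hss; apply (network_open_ext T N); auto.
  intros V NV; rewrite !(Hs _ V NV), Hss; tauto.
Qed.

Section SaturatedBase.
Context {X : Type} (t : topology X) {I : Type} (d : I -> X -> X -> R).
Hypothesis Hd : forall i, pseudometric (d i).
Hypothesis Hnw : forall i, netweight_le omega_t (quotient_top t (d i)).
Hypothesis Hloc : forall W x, open t W -> W x ->
  exists i O, open t O /\ saturated (d i) O /\ O x /\ forall y, O y -> W y.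

(* A saturated open set is the preimage of an open set of the identification, which is coded
   by its index [i] and, as the identification has a countable network, by a subset of [nat]. *)
Lemma weight_le_saturated_base : weight_le (I * (nat -> bool)) t.
Proof.
  pose (sg i := proj1_sig (constructive_indefinite_description _
                             (open_code_of_netweight _ (Hnw i)))).
  assert (Hsg : forall i W W', open (quotient_top t (d i)) W ->
            open (quotient_top t (d i)) W' -> sg i W = sg i W' -> W = W').
  { intro i; unfold sg; destruct (constructive_indefinite_description _ _); simpl; auto. }
  pose (B O := open t O /\ exists i, saturated (d i) O).
  pose (idx (O : {O | B O}) := proj1_sig (constructive_indefinite_description _ (proj2 (proj2_sig O)))).
  assert (Hidx : forall O, saturated (d (idx O)) (proj1_sig O)).
  { intro O; unfold idx; destruct (constructive_indefinite_description _ _); simpl; auto. }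
  exists B; split; [split|].
  - intros O [HO _]; auto.
  - intros W x HW Wx; destruct (Hloc W x HW Wx) as [i [O [HO [Hsat [Ox HOW]]]]].
    exists O; unfold B; eauto.
  - exists (fun O => (idx O, sg (idx O) (fun q => proj1_sig O (mrepr (d (idx O)) q)))).
    intros a b Hab; injection Hab as Hi Hs.
    assert (Hsat_b := Hidx b); rewrite <- Hi in Hs, Hsat_b.
    apply Hsg in Hs; try apply saturated_quotient_open; auto;
      try apply (proj2_sig a); try apply (proj2_sig b).
    apply pred_ext; intro x.
    rewrite <- (saturated_mrepr _ (Hd (idx a)) _ x (Hidx a)),
      <- (saturated_mrepr _ (Hd _) _ x Hsat_b).
    apply (f_equal (fun W => W (mproj (d (idx a)) x))) in Hs; rewrite Hs; tauto.
Qed.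

End SaturatedBase.

(** * The Birkhoff-Kakutani pseudometrics of a topological group *)

Definition meet_seq {X : Type} (W : nat -> nat -> X -> Prop) : nat -> X -> Prop :=
  fun n x => forall k, (k <= n)%nat -> W k n x.

Section TopologicalGroup.
Context {G : Type} {t : topology G} {mul : G -> G -> G} {inv : G -> G} {e : G}.
Hypothesis TG : topological_group t mul inv e.

Lemma mulKg x y : mul (inv x) (mul x y) = y.
Proof. rewrite (tg_assoc TG), (tg_inv_l TG), (tg_unit_l TG); auto. Qed.

Lemma mulKVg x y : mul x (mul (inv x) y) = y.
Proof. rewrite (tg_assoc TG), (tg_inv_r TG), (tg_unit_l TG); auto. Qed.

Lemma invg_uniq x y : mul x y = e -> inv x = y.
Proof. intro H; rewrite <- (tg_unit_r TG (inv x)), <- H, mulKg; auto. Qed.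

Lemma invgK x : inv (inv x) = x.
Proof. apply invg_uniq, (tg_inv_l TG). Qed.

Lemma invMg x y : inv (mul x y) = mul (inv y) (inv x).
Proof. apply invg_uniq; rewrite <- (tg_assoc TG), mulKVg, (tg_inv_r TG); auto. Qed.

Lemma invg1 : inv e = e.
Proof. apply invg_uniq, (tg_unit_l TG). Qed.

Lemma open_mull a W : open t W -> open t (fun x => W (mul a x)).
Proof.
  intro HW; apply open_of_nbhd; intros x Hx.
  destruct (tg_mul_cont TG a x W HW Hx) as [U [U' [_ [HU' [Ua [U'x H]]]]]].
  exists U'; split; [|split]; auto.
Qed.

Lemma open_mulr b W : open t W -> open t (fun x => W (mul x b)).
Proof.
  intro HW; apply open_of_nbhd; intros x Hx.
  destruct (tg_mul_cont TG x b W HW Hx) as [U [U' [HU [_ [Ux [U'b H]]]]]].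
  exists U; split; [|split]; auto.
Qed.

Lemma nbhd_mul_split U : open t U -> U e ->
  exists W, open t W /\ W e /\ forall a b, W a -> W b -> U (mul a b).
Proof.
  intros HU Ue.
  destruct (tg_mul_cont TG e e U HU) as [A [B [HA [HB [Ae [Be HAB]]]]]];
    [rewrite (tg_unit_l TG); auto|].
  exists (fun x => A x /\ B x); split; [apply open_inter; auto|].
  split; [auto|]; intros a b [Aa _] [_ Bb]; auto.
Qed.

Lemma nbhd_sym_cube U : open t U -> U e ->
  exists W, open t W /\ W e /\ (forall x, W x -> W (inv x)) /\
    forall a b c, W a -> W b -> W c -> U (mul a (mul b c)).
Proof.
  intros HU Ue.
  destruct (nbhd_mul_split U HU Ue) as [W1 [HW1 [W1e H1]]].
  destruct (nbhd_mul_split W1 HW1 W1e) as [W2 [HW2 [W2e H2]]].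
  pose (W0 x := W1 x /\ W2 x).
  exists (fun x => W0 x /\ W0 (inv x)); split; [|split; [|split]].
  - apply open_inter; [|apply (tg_inv_cont TG)]; apply open_inter; auto.
  - unfold W0; rewrite invg1; tauto.
  - intros x [? ?]; rewrite invgK; auto.
  - intros a b c [[W1a _] _] [[_ W2b] _] [[_ W2c] _]; auto.
Qed.

Definition admissible (V : nat -> G -> Prop) : Prop :=
  forall n, open t (V n) /\ V n e /\ (forall x, V n x -> V n (inv x)) /\
    (forall a b c, V (S n) a -> V (S n) b -> V (S n) c -> V n (mul a (mul b c))).

Lemma admissible_cube_e V x : admissible V -> forall n, V (S n) x -> V n x.
Proof.
  intros HV n Hx; destruct (HV n) as [_ [_ [_ Hcube]]]; destruct (HV (S n)) as [_ [He _]].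
  specialize (Hcube x e e Hx He He); rewrite (tg_unit_l TG), (tg_unit_r TG) in Hcube; auto.
Qed.

Lemma admissible_decr V : admissible V -> forall m n, (m <= n)%nat -> forall x, V n x -> V m x.
Proof.
  intros HV m n Hmn; induction Hmn as [|n Hmn IH]; auto.
  intros x Hx; apply IH, (admissible_cube_e V x HV n Hx).
Qed.

Lemma admissible_below U : open t U -> U e -> exists V, admissible V /\ forall x, V O x -> U x.
Proof.
  intros HU Ue.
  pose (nbhd := {W : G -> Prop | open t W /\ W e}).
  assert (Hshrink : forall W : nbhd, exists W' : nbhd,
    (forall x, proj1_sig W' x -> proj1_sig W' (inv x)) /\
    forall a b c, proj1_sig W' a -> proj1_sig W' b -> proj1_sig W' c ->
      proj1_sig W (mul a (mul b c))).
  { intros [W [HW We]]; destruct (nbhd_sym_cube W HW We) as [W' [HW' [W'e HW'']]].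
    exists (exist _ W' (conj HW' W'e)); simpl; tauto. }
  destruct (choice _ Hshrink) as [s Hs].
  pose (U0 := exist _ U (conj HU Ue) : nbhd).
  exists (fun n => proj1_sig (Nat.iter (S n) s U0)); split.
  - intro n; split; [|split]; [apply (proj2_sig (Nat.iter (S n) s U0)) ..|].
    split; [apply Hs | intros a b c; apply Hs].
  - intros x Hx.
    assert (He : proj1_sig (s U0) e) by apply (proj2_sig (s U0)).
    pose proof (proj2 (Hs U0) x e e Hx He He) as H; simpl in H.
    rewrite (tg_unit_l TG), (tg_unit_r TG) in H; exact H.
Qed.

Lemma admissible_meet_seq W : (forall k, admissible (W k)) -> admissible (meet_seq W).
Proof.
  intros HW n; split; [|split; [|split]].
  - apply (open_bounded_inter t (fun k => W k n)); intro k; apply (HW k n).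
  - intros k _; apply (HW k n).
  - intros x Hx k Hk; apply (HW k n); auto.
  - intros a b c Ha Hb Hc k Hk; apply (HW k n); auto.
Qed.

Section Prenorm.
Variable V : nat -> G -> Prop.

Definition chain_prod (l : list (G * nat)) : G := fold_right (fun p y => mul (fst p) y) e l.

Definition chain_weight (l : list (G * nat)) : R := fold_right (fun p r => dyad (snd p) + r) 0 l.

Definition chain_in (l : list (G * nat)) : Prop := Forall (fun p => V (snd p) (fst p)) l.

Lemma chain_weight_app l1 l2 : chain_weight (l1 ++ l2) = chain_weight l1 + chain_weight l2.
Proof. induction l1 as [|p l1 IH]; simpl; [lra | rewrite IH; lra]. Qed.

Lemma chain_weight_ge0 l : 0 <= chain_weight l.
Proof. induction l as [|p l IH]; simpl; [lra | pose proof (dyad_pos (snd p)); lra]. Qed.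

Lemma chain_weight_le0 l : chain_weight l <= 0 -> l = [].
Proof.
  destruct l as [|p l]; auto; simpl; intro H.
  pose proof (dyad_pos (snd p)); pose proof (chain_weight_ge0 l); lra.
Qed.

Lemma chain_prod_app l1 l2 : chain_prod (l1 ++ l2) = mul (chain_prod l1) (chain_prod l2).
Proof.
  induction l1 as [|p l1 IH]; simpl; [rewrite (tg_unit_l TG); auto|].
  rewrite IH, (tg_assoc TG); auto.
Qed.

Lemma chain_split l c : l <> [] -> 0 <= c <= chain_weight l ->
  exists l1 p l2, l = l1 ++ p :: l2 /\ chain_weight l1 <= c <= chain_weight l1 + dyad (snd p).
Proof.
  revert c; induction l as [|p l IH]; intros c Hne Hc; [congruence|].
  destruct (Rle_dec c (dyad (snd p))).
  - exists [], p, l; simpl; split; [reflexivity | lra].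
  - destruct (IH (c - dyad (snd p))) as [l1 [q [l2 [-> H]]]].
    + intros ->; simpl in Hc; lra.
    + simpl in Hc; lra.
    + exists (p :: l1), q, l2; simpl; split; [reflexivity | lra].
Qed.

Hypothesis HV : admissible V.

(* Split the chain at its weight midpoint: both halves weigh at most [dyad (S n)], and the
   middle link lies in [V (S n)] unless it carries the whole weight. *)
Lemma chain_prod_in l n : chain_in l -> chain_weight l <= dyad n -> V n (chain_prod l).
Proof.
  revert l n; induction l as [l IH] using (well_founded_induction
    (well_founded_ltof _ (@length (G * nat)))); intros n Hin Hw.
  destruct l as [|q l']; [apply (HV n)|].
  destruct (chain_split (q :: l') (chain_weight (q :: l') / 2)) as [l1 [[x m] [l2 [Hl Hmid]]]];
    [discriminate | pose proof (chain_weight_ge0 (q :: l')); lra|].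
  assert (Hshorter : forall l0, (length l0 <= length l1 + length l2)%nat ->
                       ltof _ (@length (G * nat)) l0 (q :: l'))
    by (intros; unfold ltof; rewrite Hl, length_app; simpl; lia).
  rewrite Hl in Hin, Hw, Hmid |- *; rewrite chain_weight_app in Hw, Hmid; simpl in Hw, Hmid.
  apply Forall_app in Hin as [Hin1 Hin2]; inversion Hin2 as [|? ? Hx Hin3]; subst.
  pose proof (chain_weight_ge0 l1); pose proof (chain_weight_ge0 l2).
  rewrite chain_prod_app; simpl.
  destruct (lt_eq_lt_dec m n) as [[Hlt | ->] | Hgt].
  - pose proof (dyad_lt m n Hlt); lra.
  - rewrite (chain_weight_le0 l1), (chain_weight_le0 l2) by lra; simpl.
    rewrite (tg_unit_l TG), (tg_unit_r TG); auto.
  - apply (HV n).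
    + apply IH; auto; [apply Hshorter; lia | rewrite dyad_S; lra].
    + apply (admissible_decr V HV (S n) m); auto.
    + apply IH; auto; [apply Hshorter; lia | rewrite dyad_S; lra].
Qed.

(* Allowing the weight [1] makes the infimum defined everywhere and [prenorm] at most [1]. *)
Definition chain_weights (x : G) (s : R) : Prop :=
  s = 1 \/ exists l, chain_in l /\ chain_prod l = x /\ chain_weight l = s.

Definition prenorm (x : G) : R := Rinf (chain_weights x).

Lemma chain_weights_ne x : exists s, chain_weights x s.
Proof. exists 1; left; auto. Qed.

Lemma chain_weights_ge0 x s : chain_weights x s -> 0 <= s.
Proof. intros [-> | [l [_ [_ <-]]]]; [lra | apply chain_weight_ge0]. Qed.

Lemma prenorm_le x s : chain_weights x s -> prenorm x <= s.
Proof. apply Rinf_le; [apply chain_weights_ne | apply chain_weights_ge0]. Qed.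

Lemma prenorm_ge0 x : 0 <= prenorm x.
Proof. apply Rinf_ge0; [apply chain_weights_ne | apply chain_weights_ge0]. Qed.

Lemma prenorm_approx x eps : 0 < eps -> exists s, chain_weights x s /\ s < prenorm x + eps.
Proof. apply Rinf_approx; [apply chain_weights_ne | apply chain_weights_ge0]. Qed.

Lemma prenorm_le_approx x r : (forall s, chain_weights x s -> r <= s) -> r <= prenorm x.
Proof.
  intro Hr; apply Rle_plus_epsilon; intros eps Heps.
  destruct (prenorm_approx x eps Heps) as [s [Hs Hlt]]; specialize (Hr s Hs); lra.
Qed.

Lemma prenorm_e : prenorm e = 0.
Proof.
  apply Rle_antisym; [|apply prenorm_ge0].
  apply prenorm_le; right; exists []; repeat split; constructor.
Qed.

Lemma prenorm_of_in x n : V n x -> prenorm x <= dyad n.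
Proof.
  intro Hx; apply prenorm_le; right; exists [(x, n)]; simpl.
  repeat split; [repeat constructor; auto | apply (tg_unit_r TG) | lra].
Qed.

Lemma prenorm_lt_in x n : prenorm x < dyad n -> V n x.
Proof.
  intro Hx; destruct (prenorm_approx x (dyad n - prenorm x)) as [s [[-> | [l [Hl [<- Hw]]]] Hs]];
    [lra | pose proof (dyad_le1 n); lra |].
  apply chain_prod_in; auto; lra.
Qed.

Lemma prenorm_zero_in x : prenorm x = 0 -> forall n, V n x.
Proof. intros Hx n; apply prenorm_lt_in; rewrite Hx; apply dyad_pos. Qed.

Lemma prenorm_mul x y : prenorm (mul x y) <= prenorm x + prenorm y.
Proof.
  apply Rle_plus_epsilon; intros eps Heps.
  destruct (prenorm_approx x (eps / 2)) as [s1 [Hs1 Hlt1]]; [lra|].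
  destruct (prenorm_approx y (eps / 2)) as [s2 [Hs2 Hlt2]]; [lra|].
  enough (prenorm (mul x y) <= s1 + s2) by lra.
  pose proof (chain_weights_ge0 _ _ Hs1); pose proof (chain_weights_ge0 _ _ Hs2).
  destruct Hs1 as [-> | [l1 [Hl1 [<- <-]]]];
    [pose proof (prenorm_le (mul x y) 1 (or_introl eq_refl)); lra|].
  destruct Hs2 as [-> | [l2 [Hl2 [<- <-]]]];
    [pose proof (prenorm_le (mul (chain_prod l1) y) 1 (or_introl eq_refl)); lra|].
  apply prenorm_le; right; exists (l1 ++ l2).
  rewrite chain_prod_app, chain_weight_app; repeat split; auto; apply Forall_app; auto.
Qed.

Definition chain_inv (l : list (G * nat)) : list (G * nat) :=
  rev (map (fun p => (inv (fst p), snd p)) l).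

Lemma chain_prod_inv l : chain_prod (chain_inv l) = inv (chain_prod l).
Proof.
  unfold chain_inv; induction l as [|[x n] l IH]; simpl; [rewrite invg1; auto|].
  rewrite chain_prod_app, IH, invMg; simpl; rewrite (tg_unit_r TG); auto.
Qed.

Lemma chain_weight_inv l : chain_weight (chain_inv l) = chain_weight l.
Proof.
  unfold chain_inv; induction l as [|[x n] l IH]; simpl; auto.
  rewrite chain_weight_app, IH; simpl; lra.
Qed.

Lemma chain_in_inv l : chain_in l -> chain_in (chain_inv l).
Proof.
  intro Hl; apply Forall_rev, Forall_map.
  revert Hl; apply Forall_impl; intros [x n] Hx; apply (HV n); auto.
Qed.

Lemma prenorm_inv_le x : prenorm (inv x) <= prenorm x.
Proof.
  apply prenorm_le_approx; intros s [-> | [l [Hl [<- <-]]]].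
  - apply prenorm_le; left; auto.
  - apply prenorm_le; right; exists (chain_inv l).
    rewrite chain_prod_inv, chain_weight_inv; auto using chain_in_inv.
Qed.

Lemma prenorm_inv x : prenorm (inv x) = prenorm x.
Proof.
  apply Rle_antisym; [apply prenorm_inv_le|].
  rewrite <- (invgK x) at 1; apply prenorm_inv_le.
Qed.

Definition gdist (x y : G) : R := prenorm (mul (inv x) y).

Lemma gdist_pseudometric : pseudometric gdist.
Proof.
  unfold gdist; split; [|split].
  - intro x; rewrite (tg_inv_l TG); apply prenorm_e.
  - intros x y; rewrite <- prenorm_inv, invMg, invgK; auto.
  - intros x y z; replace (mul (inv x) z) with (mul (mul (inv x) y) (mul (inv y) z))
      by (rewrite <- (tg_assoc TG), mulKVg; auto).
    apply prenorm_mul.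
Qed.

Lemma gdist_ball_open x r : open t (fun y => gdist x y < r).
Proof.
  apply open_of_nbhd; intros y Hy.
  destruct (dyad_small (r - gdist x y)) as [n Hn]; [lra|].
  exists (fun z => V n (mul (inv y) z)); split; [|split].
  - apply open_mull, (HV n).
  - rewrite (tg_inv_l TG); apply (HV n).
  - intros z Hz; apply prenorm_of_in in Hz.
    pose proof (pm_tri _ gdist_pseudometric x y z); unfold gdist in *; lra.
Qed.

End Prenorm.

Lemma admissible_quotient_netweight V : admissible V -> lindelof t -> stable omega_t t ->
  netweight_le omega_t (quotient_top t (gdist V)).
Proof.
  intros HV HL HS.
  apply (quotient_netweight t (gdist V) (gdist_pseudometric V HV)); auto.
  - apply gdist_ball_open; auto.
  - intro n; apply (lindelof_dense_seq t (gdist V) (gdist_pseudometric V HV) e); auto.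
    + apply gdist_ball_open; auto.
    + apply dyad_pos.
Qed.

Lemma admissible_kernel_closed V : admissible V -> open t (fun y => ~ forall n, V n y).
Proof.
  intro HV; apply open_of_nbhd; intros y Hy.
  apply not_all_ex_not in Hy as [n Hn].
  exists (fun z => V (S n) (mul (inv y) z)); split; [|split].
  - apply open_mull, (HV (S n)).
  - rewrite (tg_inv_l TG); apply (HV (S n)).
  - intros z Hz Hker; apply Hn.
    replace y with (mul z (mul (inv (mul (inv y) z)) e)).
    + apply (HV n); [apply Hker | apply (HV (S n)); auto | apply (HV (S n))].
    + rewrite (tg_unit_r TG), invMg, invgK, mulKVg; auto.
Qed.

Lemma kernel_below (K : Type) (a0 : K) (Va : K -> nat -> G -> Prop) :
  lindelof t -> (forall a, admissible (Va a)) -> (forall y, (forall a, Va a O y) -> y = e) ->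
  forall U, open t U -> U e ->
  exists A : nat -> K, forall z, prenorm (meet_seq (fun k => Va (A k))) z = 0 -> U z.
Proof.
  intros HL HVa Hsep U HU Ue.
  pose (cover (i : option K) :=
    match i with Some a => fun y => ~ forall n, Va a n y | None => U end).
  destruct (lindelof_seq_subcover t (option K) None cover HL) as [s Hs].
  - intros [a|]; simpl; auto; apply admissible_kernel_closed; auto.
  - intro y; destruct (classic (U y)) as [Uy | nUy]; [exists None; auto|].
    assert (Hne : ~ forall a, Va a O y) by (intro H; apply nUy; rewrite (Hsep y H); auto).
    apply not_all_ex_not in Hne as [a Ha]; exists (Some a); simpl; intro Hall; apply Ha, Hall.
  - pose (A k := match s k with Some a => a | None => a0 end).
    exists A; intros z Hz; destruct (Hs z) as [k Hk].
    pose proof (prenorm_zero_in _ (admissible_meet_seq _ (fun k => HVa (A k))) z Hz) as Hin.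
    unfold cover, A in *; destruct (s k) as [a|] eqn:Hsk; auto.
    exfalso; apply Hk; intro n.
    apply (admissible_decr _ (HVa a) n (max n k)); [lia|].
    specialize (Hin (max n k) k (Nat.le_max_r n k)); simpl in Hin; rewrite Hsk in Hin; exact Hin.
Qed.

Lemma saturated_nbhd V W x Vs : admissible V -> open t Vs ->
  (forall a b, Vs a -> Vs b -> W (mul x (mul a b))) -> (forall z, prenorm V z = 0 -> Vs z) ->
  exists O, open t O /\ saturated (gdist V) O /\ O x /\ forall y, O y -> W y.
Proof.
  intros HV HVs HW Hker.
  pose proof (gdist_pseudometric V HV) as Hd.
  exists (fun y => exists v, Vs (mul (inv x) v) /\ gdist V v y = 0); split; [|split; [|split]].
  - apply open_of_nbhd; intros y [v [Vv Hv]].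
    (* [y = v n] with [n] in the kernel; shifting [y] to [z] shifts [v] to [z n^-1] *)
    set (n := mul (inv v) y).
    exists (fun z => Vs (mul (inv x) (mul z (inv n)))); split; [|split].
    + apply (open_mulr (inv n) (fun w => Vs (mul (inv x) w))), open_mull; auto.
    + unfold n; rewrite invMg, invgK, mulKVg; auto.
    + intros z Hz; exists (mul z (inv n)); split; auto.
      unfold gdist; rewrite invMg, invgK, <- (tg_assoc TG), (tg_inv_l TG), (tg_unit_r TG).
      exact Hv.
  - intros y y' Hyy' [v [Vv Hv]]; exists v; split; auto.
    pose proof (pm_tri _ Hd v y y'); pose proof (pm_ge0 _ Hd v y'); lra.
  - exists x; rewrite (tg_inv_l TG); split; [apply Hker, (prenorm_e V) | apply (pm_refl _ Hd)].
  - intros y [v [Vv Hv]].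
    replace y with (mul x (mul (mul (inv x) v) (mul (inv v) y))).
    + apply HW; auto.
    + rewrite (tg_assoc TG), mulKVg, mulKVg; auto.
Qed.

Lemma local_saturated_base (K : Type) (a0 : K) (Va : K -> nat -> G -> Prop) :
  lindelof t -> (forall a, admissible (Va a)) -> (forall y, (forall a, Va a O y) -> y = e) ->
  forall W x, open t W -> W x -> exists A O, open t O /\
    saturated (gdist (meet_seq (fun k => Va (A k)))) O /\ O x /\ forall y, O y -> W y.
Proof.
  intros HL HVa Hsep W x HW Wx.
  destruct (nbhd_mul_split (fun z => W (mul x z))) as [Vs [HVs [Vse HVs2]]];
    [apply open_mull; auto | rewrite (tg_unit_r TG); auto |].
  destruct (kernel_below K a0 Va HL HVa Hsep Vs HVs Vse) as [A HA].
  exists A; apply saturated_nbhd with Vs; auto; apply admissible_meet_seq; auto.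
Qed.

End TopologicalGroup.

Arguments admissible {G} t mul inv e V.
Arguments gdist {G} mul inv e V x y.

Definition encode_pair (p : (nat -> continuum_t) * (nat -> bool)) : continuum_t :=
  fun n => if Nat.even n then snd p (Nat.div2 n)
           else let (i, j) := Cantor.of_nat (Nat.div2 n) in fst p i j.

Lemma encode_pair_inj p q : encode_pair p = encode_pair q -> p = q.
Proof.
  destruct p as [A S], q as [A' S']; intro H; f_equal.
  - apply functional_extensionality; intro i; apply functional_extensionality; intro j.
    apply (f_equal (fun f => f (2 * Cantor.to_nat (i, j) + 1)%nat)) in H.
    unfold encode_pair in H.
    rewrite Nat.even_odd, Nat.div2_odd', Cantor.cancel_of_to in H; exact H.
  - apply functional_extensionality; intro k.
    apply (f_equal (fun f => f (2 * k)%nat)) in H.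
    unfold encode_pair in H; rewrite Nat.even_even, Nat.div2_even in H; exact H.
Qed.

Theorem corollary4 (G : Type) (t : topology G) (mul : G -> G -> G)
  (inv : G -> G) (e : G) :
  topological_group t mul inv e ->
  hausdorff t -> lindelof t -> stable omega_t t ->
  pseudochar_le continuum_t t ->
  weight_le continuum_t t.
Proof.
  intros TG _ HL HS Hpsi.
  destruct (pseudochar_family t continuum_t e Hpsi) as [U [HUopen [HUe HUsep]]].
  destruct (choice (fun a V => admissible t mul inv e V /\ forall x, V O x -> U a x))
    as [Va HVa]; [intro a; apply (admissible_below TG); auto|].
  assert (HA : forall A : nat -> continuum_t,
            admissible t mul inv e (meet_seq (fun k => Va (A k))))
    by (intro A; apply admissible_meet_seq; intro; apply HVa).
  destruct (weight_le_saturated_base t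
              (fun A => gdist mul inv e (meet_seq (fun k => Va (A k))))) as [B [HB HBcard]].
  - intro A; apply (gdist_pseudometric TG), HA.
  - intro A; apply (admissible_quotient_netweight TG); auto.
  - apply (local_saturated_base TG continuum_t (fun _ => false) Va HL); [apply HVa|].
    intros y Hy; apply HUsep; intro a; apply HVa, Hy.
  - exists B; split; auto; apply (card_le_inj B encode_pair encode_pair_inj HBcard).
Qed.
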